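(* Let $(\mathcal{C},\psi)$ be a t-pair and $j\in\{1,\dots,7\}$. Then $\operatorname{typ}_u(\mathcal{C},\psi)=t_j$ if and only if $\operatorname{typ}(\mathcal{C},\psi)=T_j$.
   Context: Let $\mathbb{N}=\{0,1,2,\dots\}$; for an integer $k\ge 2$ let $E_k=\{0,1,\dots,k-1\}$; let $\mathcal{P}(\mathbb{N})$ be the set of nonempty finite subsets of $\mathbb{N}$. Let $F$ be a nonempty set (of attribute names). A decision table $T\in\mathcal{M}_k(F)$ is a rectangular table with $n\ge 1$ columns labeled with attributes $f_1,\dots,f_n\in F$ (any two columns labeled with the same attribute are equal), whose rows are pairwise different tuples from $E_k^n$ (the set of rows may be empty), each row being labeled with a set of decisions from $\mathcal{P}(\mathbb{N})$. Write $At(T)=\{f_1,\dots,f_n\}$ and $\Delta(T)$ for the set of rows. For a word $\alpha=(f_{i_1},\delta_1)\cdots(f_{i_m},\delta_m)$ with $f_{i_j}\in At(T)$, $\delta_j\in E_k$, the subtable $T\alpha$ consists of the rows of $T$ having value $\delta_j$ in column $f_{i_j}$ for all $j$ ($T\lambda=T$ for the empty word $\lambda$). Operations on tables: (1) removal of a column from a table with at least two columns (if groups of equal rows appear, only the first row of each group, with its decision set, is kept); (2) changing of decisions: the decision sets attached to rows are replaced arbitrarily by sets from $\mathcal{P}(\mathbb{N})$; (3) permutation of columns: swap two columns together with their attribute labels; (4) duplication of columns: add a copy of a column (with its label) next to it. A set $\mathcal{C}\subseteq\mathcal{M}_k(F)$ is a closed class if every table obtained from a table of $\mathcal{C}$ by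 finitely many such operations belongs to $\mathcal{C}$. A decision tree over $\mathcal{M}_k(F)$ is a finite directed tree with a root (unique node with no entering edge) and at least two nodes such that the root and the edges leaving the root are unlabeled, each worker node (neither root nor terminal) is labeled with an attribute from $F$, each edge leaving a worker node is labeled with a number from $E_k$, and each terminal node is labeled with a number from $\mathbb{N}$. For a complete path $\xi$ (root to terminal node) whose worker nodes are labeled $f_{j_1},\dots,f_{j_m}$ in order, with the edges leaving them labeled $\delta_1,\dots,\delta_m$, put $\pi(\xi)=(f_{j_1},\delta_1)\cdots(f_{j_m},\delta_m)$, $\varphi(\xi)=f_{j_1}\cdots f_{j_m}$ (both empty if $m=0$), and let $\tau(\xi)$ be the label of its terminal node. A nondeterministic decision tree for $T$ is a decision tree $\Gamma$ whose worker-node attributes lie in $At(T)$, such that $\bigcup_{\xi}\Delta(T\pi(\xi))=\Delta(T)$ (union over complete paths), and for every row $r\in\Delta(T)$ and every complete path $\xi$ with $r\in\Delta(T\pi(\xi))$, $\tau(\xi)$ belongs to the decision set of $r$. A decision tree is deterministic if exactly one edge leaves the root and the edges leaving each worker node have pairwise different labels; a deterministic decision tree for $T$ is a deterministic decision tree that is a nondeterministic decision tree for $T$. A complexity measure over $\mathcal{M}_k(F)$ is any map $\psi:F^*\to\mathbb{N}$, where $F^*$ is the set of finite words over $F$ including the empty word $\lambda$. For a tree, $\psi(\Gamma)=\max_\xi\psi(\varphi(\xi))$ over complete paths. For $T$ with columns labeled $f_1,\dots,f_n$: $\psi^i(T)=\psi(f_1\cdots f_n)$, $\psi^d(T)$ is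 the minimum complexity of a deterministic decision tree for $T$, $\psi^a(T)$ the minimum complexity of a nondeterministic decision tree for $T$. A t-pair $(\mathcal{C},\psi)$ consists of a closed class $\mathcal{C}\subseteq\mathcal{M}_k(F)$ and a complexity measure $\psi$ over $\mathcal{M}_k(F)$. For $b,c\in\{i,d,a\}$ define partial functions $\mathcal{U}^{bc}_{\mathcal{C}\psi}(n)=\max\{\psi^b(T):T\in\mathcal{C},\psi^c(T)\le n\}$ (defined iff this set is nonempty and finite) and $\mathcal{L}^{bc}_{\mathcal{C}\psi}(n)=\min\{\psi^b(T):T\in\mathcal{C},\psi^c(T)\ge n\}$ (defined iff this set is nonempty). For a partial function $g:\mathbb{N}\to\mathbb{N}$ with domain $\mathrm{Dom}(g)$, let $\mathrm{Dom}^+(g)=\{n\in\mathrm{Dom}(g):g(n)\ge n\}$, $\mathrm{Dom}^-(g)=\{n\in\mathrm{Dom}(g):g(n)\le n\}$. Its type $\operatorname{typ}(g)$ is: $\alpha$ if $\mathrm{Dom}(g)$ is infinite and $g$ is bounded above; $\beta$ if $\mathrm{Dom}(g)$ is infinite, $\mathrm{Dom}^+(g)$ is finite and $g$ is unbounded above; $\gamma$ if $\mathrm{Dom}^+(g)$ and $\mathrm{Dom}^-(g)$ are both infinite; $\delta$ if $\mathrm{Dom}(g)$ is infinite and $\mathrm{Dom}^-(g)$ is finite; $\epsilon$ if $\mathrm{Dom}(g)$ is finite. The upper type $\operatorname{typ}_u(\mathcal{C},\psi)$ is the $3\times3$ table with rows and columns indexed by $i,d,a$ (in this order) with entry $\operatorname{typ}(\mathcal{U}^{bc}_{\mathcal{C}\psi})$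 in row $b$, column $c$; the type $\operatorname{typ}(\mathcal{C},\psi)$ is the analogous table with entry the pair $\operatorname{typ}(\mathcal{L}^{bc}_{\mathcal{C}\psi})\operatorname{typ}(\mathcal{U}^{bc}_{\mathcal{C}\psi})$. Row by row (rows $i,d,a$; entries in columns $i,d,a$): $t_1$: all entries $\alpha$. $t_2$: $(\gamma,\epsilon,\epsilon)$; $(\alpha,\alpha,\alpha)$; $(\alpha,\alpha,\alpha)$. $t_3$: $(\gamma,\epsilon,\epsilon)$; $(\beta,\gamma,\epsilon)$; $(\alpha,\alpha,\alpha)$. $t_4$: $(\gamma,\epsilon,\epsilon)$; $(\gamma,\gamma,\epsilon)$; $(\alpha,\alpha,\alpha)$. $t_5$: $(\gamma,\epsilon,\epsilon)$; $(\gamma,\gamma,\gamma)$; $(\gamma,\gamma,\gamma)$. $t_6$: $(\gamma,\epsilon,\epsilon)$; $(\gamma,\gamma,\delta)$; $(\gamma,\gamma,\gamma)$. $t_7$: $(\gamma,\epsilon,\epsilon)$; $(\gamma,\gamma,\epsilon)$; $(\gamma,\gamma,\gamma)$. $T_1$: all entries $\epsilon\alpha$. $T_2$: $(\gamma\gamma,\epsilon\epsilon,\epsilon\epsilon)$; $(\alpha\alpha,\epsilon\alpha,\epsilon\alpha)$; $(\alpha\alpha,\epsilon\alpha,\epsilon\alpha)$. $T_3$: $(\gamma\gamma,\delta\epsilon,\epsilon\epsilon)$; $(\alpha\beta,\gamma\gamma,\epsilon\epsilon)$; $(\alpha\alpha,\alpha\alpha,\epsilon\alpha)$. $T_4$: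 $(\gamma\gamma,\gamma\epsilon,\epsilon\epsilon)$; $(\alpha\gamma,\gamma\gamma,\epsilon\epsilon)$; $(\alpha\alpha,\alpha\alpha,\epsilon\alpha)$. $T_5$: $(\gamma\gamma,\gamma\epsilon,\gamma\epsilon)$; $(\alpha\gamma,\gamma\gamma,\gamma\gamma)$; $(\alpha\gamma,\gamma\gamma,\gamma\gamma)$. $T_6$: $(\gamma\gamma,\gamma\epsilon,\gamma\epsilon)$; $(\alpha\gamma,\gamma\gamma,\gamma\delta)$; $(\alpha\gamma,\beta\gamma,\gamma\gamma)$. $T_7$: $(\gamma\gamma,\gamma\epsilon,\gamma\epsilon)$; $(\alpha\gamma,\gamma\gamma,\gamma\epsilon)$; $(\alpha\gamma,\alpha\gamma,\gamma\gamma)$. *)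

From Stdlib Require Import List Arith PeanoNat ClassicalEpsilon.
Import ListNotations.
Set Implicit Arguments.

Section Tables.
Variable F : Type.

(* A decision table: the list of column labels f_1..f_n and the (ordered)
   list of rows; a row is its tuple of values together with its decision
   set (a nonempty finite subset of N, given as a list). *)
Record table := mkTable { attrs : list F ; rows : list (list nat * list nat) }.

Definition wf_table (k : nat) (T : table) : Prop :=
  attrs T <> [] /\
  (forall r, In r (rows T) ->
     length (fst r) = length (attrs T) /\ (forall x, In x (fst r) -> x < k)
     /\ snd r <> []) /\
  NoDup (map fst (rows T)) /\
  (forall i j f, nth_error (attrs T) i = Some f -> nth_error (attrs T) j = Some f ->
     forall r, In r (rows T) -> nth_error (fst r) i = nth_error (fst r) j).

Definition remove_at {A} (i : nat) (l : list A) : list A :=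
  firstn i l ++ skipn (S i) l.

Fixpoint replace_at {A} (i : nat) (x : A) (l : list A) : list A :=
  match l, i with
  | [], _ => []
  | _ :: t, 0 => x :: t
  | y :: t, S i' => y :: replace_at i' x t
  end.

Definition swap_at {A} (i j : nat) (l : list A) : list A :=
  match nth_error l i, nth_error l j with
  | Some a, Some b => replace_at i b (replace_at j a l)
  | _, _ => l
  end.

Definition dup_at {A} (i : nat) (l : list A) : list A :=
  match nth_error l i with
  | Some a => firstn (S i) l ++ a :: skipn (S i) l
  | None => l
  end.

Fixpoint keep_first (seen : list (list nat)) (l : list (list nat * list nat))
  : list (list nat * list nat) :=
  match l with
  | [] => []
  | r :: t =>
      if in_dec (list_eq_dec Nat.eq_dec) (fst r) seen then keep_first seen t
      else r :: keep_first (fst r :: seen) t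
  end.

Inductive op_step (k : nat) : table -> table -> Prop :=
  | op_remove T i :
      2 <= length (attrs T) -> i < length (attrs T) ->
      op_step k T (mkTable (remove_at i (attrs T))
                     (keep_first [] (map (fun r => (remove_at i (fst r), snd r)) (rows T))))
  | op_change T T' :
      attrs T' = attrs T -> map fst (rows T') = map fst (rows T) -> wf_table k T' ->
      op_step k T T'
  | op_swap T i j :
      i < length (attrs T) -> j < length (attrs T) ->
      op_step k T (mkTable (swap_at i j (attrs T))
                     (map (fun r => (swap_at i j (fst r), snd r)) (rows T)))
  | op_dup T i :
      i < length (attrs T) ->
      op_step k T (mkTable (dup_at i (attrs T))
                     (map (fun r => (dup_at i (fst r), snd r)) (rows T))).

Definition closed_class (k : nat) (C : table -> Prop) : Prop :=
  (forall T, C T -> wf_table k T) /\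
  (forall T T', C T -> op_step k T T' -> C T').

Definition row_in_sub (T : table) (alpha : list (F * nat)) (r : list nat * list nat) : Prop :=
  In r (rows T) /\
  forall f d, In (f, d) alpha ->
    exists i, nth_error (attrs T) i = Some f /\ nth_error (fst r) i = Some d.

(* A non-root node: a terminal node labelled by a number, or a worker node
   labelled by an attribute with its outgoing edges (edge label, child). *)
Inductive node : Type :=
  | Term : nat -> node
  | Work : F -> list (nat * node) -> node.

(* the tree is given by the (nonempty) list of children of its unlabelled root *)
Definition dtree := list node.

Inductive node_wf (k : nat) (P : F -> Prop) (det : bool) : node -> Prop :=
  | wf_term d : node_wf k P det (Term d)
  | wf_work f ch :
      P f -> ch <> [] ->
      (forall e, In e ch -> fst e < k /\ node_wf k P det (snd e)) ->
      (det = true -> NoDup (map fst ch)) ->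
      node_wf k P det (Work f ch).

(* complete paths below a node: the word pi(xi) and the terminal label tau(xi) *)
Fixpoint paths (x : node) : list (list (F * nat) * nat) :=
  match x with
  | Term d => [([], d)]
  | Work f ch =>
      (fix go (l : list (nat * node)) : list (list (F * nat) * nat) :=
         match l with
         | [] => []
         | (d, c) :: l' => map (fun p => ((f, d) :: fst p, snd p)) (paths c) ++ go l'
         end) ch
  end.

Definition tree_paths (G : dtree) : list (list (F * nat) * nat) := flat_map paths G.

Definition tree_cost (psi : list F -> nat) (G : dtree) : nat :=
  fold_right Nat.max 0 (map (fun p => psi (map fst (fst p))) (tree_paths G)).

(* Gamma is a nondeterministic (det = false) / deterministic (det = true)
   decision tree for T *)
Definition tree_for (k : nat) (det : bool) (T : table) (G : dtree) : Prop :=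
  G <> [] /\
  (det = true -> length G = 1) /\
  (forall x, In x G -> node_wf k (fun f => In f (attrs T)) det x) /\
  (forall r, In r (rows T) -> exists p, In p (tree_paths G) /\ row_in_sub T (fst p) r) /\
  (forall r p, In r (rows T) -> In p (tree_paths G) -> row_in_sub T (fst p) r ->
     In (snd p) (snd r)).

Inductive tag := ti | td | ta.

(* psi_val k psi b T v  :<->  psi^b(T) = v *)
Definition psi_val (k : nat) (psi : list F -> nat) (b : tag) (T : table) (v : nat) : Prop :=
  match b with
  | ti => v = psi (attrs T)
  | td => (exists G, tree_for k true T G /\ tree_cost psi G = v) /\
          (forall G, tree_for k true T G -> v <= tree_cost psi G)
  | ta => (exists G, tree_for k false T G /\ tree_cost psi G = v) /\
          (forall G, tree_for k false T G -> v <= tree_cost psi G)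
  end.

(* partial functions N -> N are given by their graphs *)
Definition upper_set k C psi b c n v : Prop :=
  exists T, C T /\ psi_val k psi b T v /\ exists w, psi_val k psi c T w /\ w <= n.
Definition lower_set k C psi b c n v : Prop :=
  exists T, C T /\ psi_val k psi b T v /\ exists w, psi_val k psi c T w /\ n <= w.

Definition U_fun k C psi b c (n m : nat) : Prop :=
  upper_set k C psi b c n m /\ forall v, upper_set k C psi b c n v -> v <= m.
Definition L_fun k C psi b c (n m : nat) : Prop :=
  lower_set k C psi b c n m /\ forall v, lower_set k C psi b c n v -> m <= v.

End Tables.

Inductive ty := ty_alpha | ty_beta | ty_gamma | ty_delta | ty_eps.

Definition infinite_set (P : nat -> Prop) : Prop := forall N, exists n, N <= n /\ P n.

Definition Dom (g : nat -> nat -> Prop) (n : nat) : Prop := exists m, g n m.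
Definition DomPlus (g : nat -> nat -> Prop) (n : nat) : Prop := exists m, g n m /\ n <= m.
Definition DomMinus (g : nat -> nat -> Prop) (n : nat) : Prop := exists m, g n m /\ m <= n.
Definition bounded_above (g : nat -> nat -> Prop) : Prop :=
  exists B, forall n m, g n m -> m <= B.

Definition is_alpha g := infinite_set (Dom g) /\ bounded_above g.
Definition is_beta g := infinite_set (Dom g) /\ ~ infinite_set (DomPlus g) /\ ~ bounded_above g.
Definition is_gamma g := infinite_set (DomPlus g) /\ infinite_set (DomMinus g).
Definition is_delta g := infinite_set (Dom g) /\ ~ infinite_set (DomMinus g).
Definition is_eps g := ~ infinite_set (Dom g).

(* typ(g), following the order of the definition *)
Definition typ (g : nat -> nat -> Prop) : ty :=
  if excluded_middle_informative (is_alpha g) then ty_alpha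
  else if excluded_middle_informative (is_beta g) then ty_beta
  else if excluded_middle_informative (is_gamma g) then ty_gamma
  else if excluded_middle_informative (is_delta g) then ty_delta
  else ty_eps.

Definition typ_u {F} (k : nat) (C : table F -> Prop) (psi : list F -> nat) (b c : tag) : ty :=
  typ (U_fun k C psi b c).
Definition typ_full {F} (k : nat) (C : table F -> Prop) (psi : list F -> nat) (b c : tag)
  : ty * ty :=
  (typ (L_fun k C psi b c), typ (U_fun k C psi b c)).

(* ---- the tables t_1..t_7 and T_1..T_7 (rows b, columns c) ---- *)
Definition sel {A} (c : tag) (x y z : A) : A :=
  match c with ti => x | td => y | ta => z end.

Notation al := ty_alpha. Notation be := ty_beta. Notation ga := ty_gamma.
Notation de := ty_delta. Notation ep := ty_eps.

Definition t_tab (j : nat) (b c : tag) : ty :=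
  match j with
  | 1 => al
  | 2 => sel b (sel c ga ep ep) (sel c al al al) (sel c al al al)
  | 3 => sel b (sel c ga ep ep) (sel c be ga ep) (sel c al al al)
  | 4 => sel b (sel c ga ep ep) (sel c ga ga ep) (sel c al al al)
  | 5 => sel b (sel c ga ep ep) (sel c ga ga ga) (sel c ga ga ga)
  | 6 => sel b (sel c ga ep ep) (sel c ga ga de) (sel c ga ga ga)
  | 7 => sel b (sel c ga ep ep) (sel c ga ga ep) (sel c ga ga ga)
  | _ => al
  end.

Definition T_tab (j : nat) (b c : tag) : ty * ty :=
  match j with
  | 1 => (ep, al)
  | 2 => sel b (sel c (ga, ga) (ep, ep) (ep, ep))
               (sel c (al, al) (ep, al) (ep, al))
               (sel c (al, al) (ep, al) (ep, al))
  | 3 => sel b (sel c (ga, ga) (de, ep) (ep, ep))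
               (sel c (al, be) (ga, ga) (ep, ep))
               (sel c (al, al) (al, al) (ep, al))
  | 4 => sel b (sel c (ga, ga) (ga, ep) (ep, ep))
               (sel c (al, ga) (ga, ga) (ep, ep))
               (sel c (al, al) (al, al) (ep, al))
  | 5 => sel b (sel c (ga, ga) (ga, ep) (ga, ep))
               (sel c (al, ga) (ga, ga) (ga, ga))
               (sel c (al, ga) (ga, ga) (ga, ga))
  | 6 => sel b (sel c (ga, ga) (ga, ep) (ga, ep))
               (sel c (al, ga) (ga, ga) (ga, de))
               (sel c (al, ga) (be, ga) (ga, ga))
  | 7 => sel b (sel c (ga, ga) (ga, ep) (ga, ep))
               (sel c (al, ga) (ga, ga) (ga, ep))
               (sel c (al, ga) (al, ga) (ga, ga))
  | _ => (ep, al)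
  end.

(* Write L^{fg} and U^{gf} for the lower and upper functions of two complexity functions
   f, g on the class.  If U^{gf}(n) >= n, the table attaining it has g >= n and f <= n, so
   L^{fg}(n) <= n; if U^{gf}(n) <= n, every table with g >= n + 1 has f >= n + 1, so
   L^{fg}(n + 1) >= n + 1.  Together with the observation that L^{fg} is total when g is
   unbounded and has finite domain when g is bounded, this transfer of points across the diagonal lets
   each entry of the upper table t_j force the type of the matching lower function.  The only
   fact about decision trees used is psi^d <= psi^i, witnessed by the deterministic tree that
   queries every column in turn; it is needed to turn beta into delta in T_3. *)

From Stdlib Require Import List Arith Lia Classical ClassicalEpsilon
  FunctionalExtensionality PropExtensionality.
Import ListNotations.

Lemma exists_least (A : nat -> Prop) :
  (exists n, A n) -> exists m, A m /\ forall v, A v -> m <= v.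
Proof.
  intros HA.
  destruct (dec_inh_nat_subset_has_unique_least_element A (fun n => classic (A n)) HA)
    as [m [[Am Hm] _]].
  eauto.
Qed.

Lemma exists_greatest (A : nat -> Prop) B :
  (exists v, A v) -> (forall v, A v -> v <= B) -> exists m, A m /\ forall v, A v -> v <= m.
Proof.
  intros HA. induction B as [|B IH]; intros HB.
  - destruct HA as [v Av]. exists v. split; [exact Av|].
    intros w Aw. pose proof (HB w Aw). lia.
  - destruct (classic (A (S B))) as [AB|AB]; [exists (S B); split; auto|].
    apply IH. intros v Av. pose proof (HB v Av).
    assert (v <> S B) by (intros ->; contradiction). lia.
Qed.

Lemma finite_setP (A : nat -> Prop) :
  ~ infinite_set A <-> exists N, forall n, N <= n -> ~ A n.
Proof.
  split.
  - intros HA. apply NNPP. intros Hno. apply HA. intros N. apply NNPP. intros HN.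
    apply Hno. exists N. intros n Hn An. apply HN. eauto.
  - intros [N HN] HA. destruct (HA N) as [n [Hn An]]. exact (HN n Hn An).
Qed.

Lemma infinite_set_mono (A B : nat -> Prop) :
  (forall n, A n -> B n) -> infinite_set A -> infinite_set B.
Proof. intros HAB HA N. destruct (HA N) as [n [Hn An]]. eauto. Qed.

Lemma infinite_dom_split g :
  infinite_set (Dom g) -> ~ infinite_set (DomPlus g) -> infinite_set (DomMinus g).
Proof.
  intros HD Hp. apply finite_setP in Hp. destruct Hp as [N0 HN0]. intros N.
  destruct (HD (N + N0)) as [n [Hn [m Hm]]]. exists n. split; [lia|]. exists m. split; [exact Hm|].
  destruct (le_lt_dec m n) as [Hle|Hlt]; [exact Hle|].
  exfalso. apply (HN0 n); [lia|]. exists m. split; [exact Hm|lia].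
Qed.

Lemma unbounded_of_dom_plus g : infinite_set (DomPlus g) -> ~ bounded_above g.
Proof.
  intros Hp [B HB]. destruct (Hp (S B)) as [n [Hn [m [Hm Hnm]]]]. pose proof (HB n m Hm). lia.
Qed.

Lemma dom_minus_of_alpha g : is_alpha g -> infinite_set (DomMinus g).
Proof.
  intros [HD [B HB]] N. destruct (HD (N + B)) as [n [Hn [m Hm]]].
  exists n. split; [lia|]. exists m. split; [exact Hm|]. pose proof (HB n m Hm). lia.
Qed.

Ltac case_typ g :=
  unfold typ;
  destruct (excluded_middle_informative (is_alpha g)) as [Ha|Na];
  [|destruct (excluded_middle_informative (is_beta g)) as [Hb|Nb];
  [|destruct (excluded_middle_informative (is_gamma g)) as [Hc|Nc];
  [|destruct (excluded_middle_informative (is_delta g)) as [Hd|Nd]]]].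

Lemma typ_alpha g : is_alpha g -> typ g = ty_alpha.
Proof. intros H. case_typ g; tauto. Qed.

Lemma typ_beta g : is_beta g -> typ g = ty_beta.
Proof. intros H. case_typ g; try tauto. exfalso. apply (proj2 (proj2 H)), Ha. Qed.

Lemma typ_gamma g : is_gamma g -> typ g = ty_gamma.
Proof.
  intros H. pose proof (unbounded_of_dom_plus g (proj1 H)) as Hu.
  case_typ g; try tauto; exfalso; [apply Hu, Ha | apply (proj1 (proj2 Hb)), H].
Qed.

Lemma typ_delta g : is_delta g -> typ g = ty_delta.
Proof.
  intros H. pose proof H as [HD Hm]. case_typ g; try tauto; exfalso; apply Hm.
  - apply dom_minus_of_alpha, Ha.
  - apply infinite_dom_split; apply Hb.
  - apply Hc.
Qed.

Lemma typ_eps g : is_eps g -> typ g = ty_eps.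
Proof.
  intros H. case_typ g; try reflexivity; exfalso; apply H.
  - apply Ha.
  - apply Hb.
  - apply (infinite_set_mono (DomPlus g)); [intros x [m [Hm _]]; exists m; exact Hm | apply Hc].
  - apply Hd.
Qed.

Lemma is_alpha_typ g : typ g = ty_alpha -> is_alpha g.
Proof. case_typ g; easy. Qed.

Lemma is_beta_typ g : typ g = ty_beta -> is_beta g.
Proof. case_typ g; easy. Qed.

Lemma is_gamma_typ g : typ g = ty_gamma -> is_gamma g.
Proof. case_typ g; easy. Qed.

Lemma is_delta_typ g : typ g = ty_delta -> is_delta g.
Proof. case_typ g; easy. Qed.

Lemma is_eps_typ g : typ g = ty_eps -> is_eps g.
Proof.
  case_typ g; try discriminate. intros _ HD.
  destruct (classic (infinite_set (DomMinus g))) as [Hm|Hm]; [|apply Nd; split; assumption].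
  destruct (classic (infinite_set (DomPlus g))) as [Hp|Hp]; [apply Nc; split; assumption|].
  destruct (classic (bounded_above g)) as [Hbd|Hbd]; [apply Na; split; assumption|].
  apply Nb. repeat split; assumption.
Qed.

Section UpperLower.
Variables (X : Type) (P : X -> Prop).

Definition upper_fun (f g : X -> nat) (n m : nat) : Prop :=
  (exists x, P x /\ f x = m /\ g x <= n) /\ (forall x, P x -> g x <= n -> f x <= m).
Definition lower_fun (f g : X -> nat) (n m : nat) : Prop :=
  (exists x, P x /\ f x = m /\ n <= g x) /\ (forall x, P x -> n <= g x -> m <= f x).

Definition unbounded_on (g : X -> nat) : Prop := forall N, exists x, P x /\ N <= g x.

Lemma lower_fun_ex f g n : (exists x, P x /\ n <= g x) -> exists m, lower_fun f g n m.
Proof.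
  intros [x [Px Hx]].
  destruct (exists_least (fun v => exists y, P y /\ f y = v /\ n <= g y)) as [m [Hm Hmin]];
    [eauto|].
  exists m. split; [exact Hm|]. intros y Py Hy. apply Hmin. eauto.
Qed.

Lemma upper_fun_ex f g n B : (exists x, P x /\ g x <= n) ->
  (forall x, P x -> g x <= n -> f x <= B) -> exists m, upper_fun f g n m.
Proof.
  intros [x [Px Hx]] HB.
  destruct (exists_greatest (fun v => exists y, P y /\ f y = v /\ g y <= n) B)
    as [m [Hm Hmax]].
  - eauto.
  - intros v [y [Py [<- Hy]]]. auto.
  - exists m. split; [exact Hm|]. intros y Py Hy. apply Hmax. eauto.
Qed.

Lemma dom_lower_fun f g : unbounded_on g -> infinite_set (Dom (lower_fun f g)).
Proof. intros Hu n. exists n. split; [lia|]. apply lower_fun_ex, Hu. Qed.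

Lemma bounded_of_upper_fun g :
  bounded_above (upper_fun g g) -> exists B, forall x, P x -> g x <= B.
Proof.
  intros [B HB]. exists B. intros x Px.
  destruct (upper_fun_ex g g (g x) (g x)) as [m Hm]; [eauto|auto|].
  pose proof (HB _ _ Hm). destruct Hm as [_ Hmax]. specialize (Hmax x Px (le_n _)). lia.
Qed.

Lemma unbounded_of_upper_fun f g : ~ bounded_above (upper_fun f g) -> unbounded_on f.
Proof.
  intros Hu N. apply NNPP. intros Hno. apply Hu. exists N.
  intros n m [[x [Px [<- _]]] _]. apply NNPP. intros Hx. apply Hno. exists x. split; [exact Px|lia].
Qed.

Lemma unbounded_of_typ_gamma f g : typ (upper_fun f g) = ty_gamma -> unbounded_on f.
Proof.
  intros H. apply (unbounded_of_upper_fun f g), unbounded_of_dom_plus, (is_gamma_typ _ H).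
Qed.

Lemma dom_minus_lower_of_dom_plus_upper f g n :
  DomPlus (upper_fun g f) n -> DomMinus (lower_fun f g) n.
Proof.
  intros [m [[[x [Px [Hx Hfx]]] _] Hnm]].
  destruct (lower_fun_ex f g n) as [m' Hm']; [exists x; split; [exact Px|lia]|].
  exists m'. split; [exact Hm'|]. destruct Hm' as [_ Hmin]. specialize (Hmin x Px). lia.
Qed.

Lemma dom_plus_lower_of_dom_minus_upper f g n : unbounded_on g ->
  DomMinus (upper_fun g f) n -> DomPlus (lower_fun f g) (S n).
Proof.
  intros Hu [m [[_ Hmax] Hmn]].
  destruct (lower_fun_ex f g (S n)) as [m' Hm']; [apply Hu|].
  exists m'. split; [exact Hm'|]. destruct Hm' as [[y [Py [<- Hy]]] _].
  destruct (le_lt_dec (f y) n) as [Hfy|Hfy]; [|lia].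
  specialize (Hmax y Py Hfy). lia.
Qed.

Lemma dom_minus_upper_of_dom_plus_lower f g n : (exists x, P x /\ f x <= n) ->
  DomPlus (lower_fun f g) (S n) -> DomMinus (upper_fun g f) n.
Proof.
  intros Hx [m [[_ Hmin] Hnm]].
  assert (Hg : forall y, P y -> f y <= n -> g y <= n).
  { intros y Py Hy. destruct (le_lt_dec (g y) n) as [Hgy|Hgy]; [exact Hgy|].
    specialize (Hmin y Py Hgy). lia. }
  destruct (upper_fun_ex g f n n Hx Hg) as [m' Hm'].
  exists m'. split; [exact Hm'|]. destruct Hm' as [[y [Py [<- Hy]]] _]. exact (Hg y Py Hy).
Qed.

Lemma dom_plus_upper_of_dom_minus_lower f g n : (forall x, P x -> g x <= f x) ->
  DomMinus (lower_fun f g) n -> DomPlus (upper_fun g f) n.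
Proof.
  intros Hle [m [[[y [Py [Hfy Hgy]]] _] Hmn]].
  destruct (upper_fun_ex g f n n) as [m' Hm'].
  - exists y. split; [exact Py|lia].
  - intros z Pz Hz. specialize (Hle z Pz). lia.
  - exists m'. split; [exact Hm'|]. destruct Hm' as [_ Hmax].
    specialize (Hmax y Py). specialize (Hle y Py). lia.
Qed.

Lemma lower_fun_unbounded f g : unbounded_on g ->
  infinite_set (Dom (upper_fun g f)) -> ~ bounded_above (lower_fun f g).
Proof.
  intros Hu HD [B HB]. destruct (HD B) as [n [Hn [M [_ HM]]]].
  destruct (lower_fun_ex f g (S M)) as [m Hm]; [apply Hu|].
  pose proof (HB _ _ Hm). destruct Hm as [[y [Py [Hfy Hgy]]] _].
  specialize (HM y Py). lia.
Qed.

Lemma typ_lower_eps f g :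
  typ (upper_fun g g) = ty_alpha -> typ (lower_fun f g) = ty_eps.
Proof.
  intros H. destruct (bounded_of_upper_fun g (proj2 (is_alpha_typ _ H))) as [B HB].
  apply typ_eps. intros HD. destruct (HD (S B)) as [n [Hn [m [[x [Px [_ Hx]]] _]]]].
  specialize (HB x Px). lia.
Qed.

Lemma typ_lower_gamma f g :
  typ (upper_fun g f) = ty_gamma -> typ (lower_fun f g) = ty_gamma.
Proof.
  intros H. pose proof (unbounded_of_typ_gamma _ _ H) as Hu.
  apply is_gamma_typ in H. destruct H as [Hp Hm]. apply typ_gamma. split.
  - intros N. destruct (Hm N) as [n [Hn Hmn]].
    exists (S n). split; [lia|]. exact (dom_plus_lower_of_dom_minus_upper f g n Hu Hmn).
  - exact (infinite_set_mono _ _ (dom_minus_lower_of_dom_plus_upper f g) Hp).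
Qed.

Lemma typ_lower_delta f g : (forall x, P x -> g x <= f x) ->
  typ (upper_fun g f) = ty_beta -> typ (lower_fun f g) = ty_delta.
Proof.
  intros Hle H. apply is_beta_typ in H. destruct H as [_ [Hp Hb]]. apply typ_delta. split.
  - apply dom_lower_fun, (unbounded_of_upper_fun _ _ Hb).
  - intros Hm. apply Hp.
    exact (infinite_set_mono _ _ (fun n => dom_plus_upper_of_dom_minus_lower f g n Hle) Hm).
Qed.

Lemma typ_lower_beta f g :
  typ (upper_fun g f) = ty_delta -> typ (lower_fun f g) = ty_beta.
Proof.
  intros H. apply is_delta_typ in H. destruct H as [HD Hm].
  assert (Hp : infinite_set (DomPlus (upper_fun g f))).
  { apply NNPP. intros Hp. exact (Hm (infinite_dom_split _ HD Hp)). }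
  pose proof (unbounded_of_upper_fun _ _ (unbounded_of_dom_plus _ Hp)) as Hu.
  destruct (Hu 0) as [x0 [Px0 _]].
  apply finite_setP in Hm. destruct Hm as [N0 HN0].
  apply typ_beta. split; [|split].
  - apply dom_lower_fun, Hu.
  - apply finite_setP. exists (S (N0 + f x0)). intros [|n] Hn Hplus; [lia|].
    apply (HN0 n); [lia|]. apply (dom_minus_upper_of_dom_plus_lower f g n); [|exact Hplus].
    exists x0. split; [exact Px0|lia].
  - apply lower_fun_unbounded; assumption.
Qed.

Lemma typ_lower_alpha f g : typ (upper_fun g g) = ty_gamma ->
  typ (upper_fun g f) = ty_eps -> typ (lower_fun f g) = ty_alpha.
Proof.
  intros H Hgf. pose proof (unbounded_of_typ_gamma _ _ H) as Hu.
  destruct (Hu 0) as [x0 [Px0 _]].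
  apply is_eps_typ, finite_setP in Hgf. destruct Hgf as [N0 HN0].
  set (c := N0 + f x0).
  (* U^{gf}(c) is undefined although f x0 <= c, so g is unbounded on {f <= c}. *)
  assert (Hc : forall N, exists y, P y /\ f y <= c /\ N <= g y).
  { intros N. apply NNPP. intros Hno. apply (HN0 c); [lia|].
    apply (upper_fun_ex g f c N).
    - exists x0. split; [exact Px0|lia].
    - intros y Py Hy. apply NNPP. intros Hgy. apply Hno. exists y. repeat split; auto; lia. }
  apply typ_alpha. split.
  - apply dom_lower_fun, Hu.
  - exists c. intros n m [_ Hmin]. destruct (Hc n) as [y [Py [Hfy Hgy]]].
    specialize (Hmin y Py Hgy). lia.
Qed.

End UpperLower.

Arguments upper_fun {X} P f g n m.
Arguments lower_fun {X} P f g n m.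

Ltac solve_lower_typ :=
  first
  [ eapply typ_lower_eps; eassumption
  | eapply typ_lower_gamma; eassumption
  | eapply typ_lower_delta; eassumption
  | eapply typ_lower_beta; eassumption
  | eapply typ_lower_alpha; eassumption ].

Theorem typ_lower_of_typ_upper (X : Type) (P : X -> Prop) (v : tag -> X -> nat) j :
  (forall x, P x -> v td x <= v ti x) -> 1 <= j <= 7 ->
  (forall b c, typ (upper_fun P (v b) (v c)) = t_tab j b c) ->
  forall b c, typ (lower_fun P (v b) (v c)) = fst (T_tab j b c).
Proof.
  intros le_d_i Hj HU.
  pose proof (HU ti ti). pose proof (HU ti td). pose proof (HU ti ta).
  pose proof (HU td ti). pose proof (HU td td). pose proof (HU td ta).
  pose proof (HU ta ti). pose proof (HU ta td). pose proof (HU ta ta).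
  clear HU. intros b c.
  destruct j as [|[|[|[|[|[|[|[|j]]]]]]]]; try lia; cbv [t_tab sel] in *;
    destruct b, c; cbv [T_tab sel fst]; solve_lower_typ.
Qed.

Lemma In_combine_nth_error {A B} (l1 : list A) (l2 : list B) a b :
  In (a, b) (combine l1 l2) -> exists i, nth_error l1 i = Some a /\ nth_error l2 i = Some b.
Proof.
  revert l2. induction l1 as [|x l1 IH]; intros [|y l2] H; simpl in H; try contradiction.
  destruct H as [H|H].
  - injection H as -> ->. exists 0. auto.
  - destruct (IH _ H) as [i Hi]. exists (S i). exact Hi.
Qed.

Lemma nth_error_In_combine {A B} (l1 : list A) (l2 : list B) i a b :
  nth_error l1 i = Some a -> nth_error l2 i = Some b -> In (a, b) (combine l1 l2).
Proof.
  revert l2 i. induction l1 as [|x l1 IH]; intros [|y l2] [|i] H1 H2; simpl in *;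
    try discriminate.
  - injection H1 as ->. injection H2 as ->. left. reflexivity.
  - right. eapply IH; eassumption.
Qed.

Lemma map_fst_combine {A B} (l1 : list A) (l2 : list B) :
  length l2 = length l1 -> map fst (combine l1 l2) = l1.
Proof.
  revert l2. induction l1 as [|a l1 IH]; intros [|b l2] H; simpl in *; try discriminate; auto.
  rewrite IH; auto.
Qed.

Lemma NoDup_map_inj {A B} (f : A -> B) l x y :
  NoDup (map f l) -> In x l -> In y l -> f x = f y -> x = y.
Proof.
  induction l as [|z l IH]; simpl; intros Hnd Hx Hy Hxy; [contradiction|].
  inversion Hnd as [|? ? Hz Hnd']; subst.
  destruct Hx as [<-|Hx], Hy as [<-|Hy]; auto; exfalso; apply Hz.
  - rewrite Hxy. apply in_map, Hy.
  - rewrite <- Hxy. apply in_map, Hx.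
Qed.

Section DecisionTrees.
Variables (F : Type) (k : nat).
Hypothesis k_pos : 1 <= k.

Lemma In_paths_Work (f : F) ch p : In p (paths (Work f ch)) <->
  exists d c q, In (d, c) ch /\ In q (paths c) /\ p = ((f, d) :: fst q, snd q).
Proof.
  induction ch as [|[d c] ch IH]; simpl.
  - split; [contradiction|intros (?&?&?&[]&_)].
  - rewrite in_app_iff, in_map_iff. simpl in IH. rewrite IH. split.
    + intros [[q [<- Hq]]|(d'&c'&q&H)]; [exists d, c, q|exists d', c', q]; intuition.
    + intros (d'&c'&q&[Hdc|Hdc]&Hq&->).
      * injection Hdc as -> ->. left. exists q. auto.
      * right. exists d', c', q. auto.
Qed.

Definition decision_of (vs : list nat) (rs : list (list nat * list nat)) : nat :=
  match find (fun r => if list_eq_dec Nat.eq_dec (fst r) vs then true else false) rs with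
  | Some r => hd 0 (snd r)
  | None => 0
  end.

Fixpoint query_tree (rs : list (list nat * list nat)) (l : list F) (pre : list nat) : node F :=
  match l with
  | [] => Term F (decision_of pre rs)
  | f :: l' => Work f (map (fun d => (d, query_tree rs l' (pre ++ [d]))) (seq 0 k))
  end.

Lemma In_paths_query_tree rs l pre p : In p (paths (query_tree rs l pre)) ->
  exists vs, length vs = length l /\ p = (combine l vs, decision_of (pre ++ vs) rs).
Proof.
  revert pre p. induction l as [|f l IH]; intros pre p Hp.
  - destruct Hp as [<-|[]]. exists []. rewrite app_nil_r. auto.
  - apply In_paths_Work in Hp. destruct Hp as (d&c&q&Hdc&Hq&->).
    apply in_map_iff in Hdc. destruct Hdc as [d' [Hdc _]]. injection Hdc as -> <-.
    destruct (IH _ _ Hq) as [vs [Hl ->]]. exists (d :: vs). split; [simpl; auto|].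
    simpl. rewrite <- app_assoc. reflexivity.
Qed.

Lemma paths_query_tree_In rs l pre vs :
  length vs = length l -> (forall x, In x vs -> x < k) ->
  In (combine l vs, decision_of (pre ++ vs) rs) (paths (query_tree rs l pre)).
Proof.
  revert pre vs. induction l as [|f l IH]; intros pre [|v vs] Hl Hk; try discriminate.
  - rewrite app_nil_r. left. reflexivity.
  - apply In_paths_Work.
    exists v, (query_tree rs l (pre ++ [v])), (combine l vs, decision_of ((pre ++ [v]) ++ vs) rs).
    split; [|split].
    + apply in_map_iff. exists v. split; [reflexivity|]. apply in_seq.
      assert (v < k) by (apply Hk; left; reflexivity). lia.
    + apply IH; [simpl in Hl; lia|]. intros x Hx. apply Hk. right. exact Hx.
    + simpl. rewrite <- app_assoc. reflexivity.
Qed.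

Lemma query_tree_wf rs (Q : F -> Prop) l pre :
  (forall f, In f l -> Q f) -> node_wf k Q true (query_tree rs l pre).
Proof.
  revert pre. induction l as [|f l IH]; intros pre HQ; simpl; constructor.
  - apply HQ. left. reflexivity.
  - destruct k; [lia|]. discriminate.
  - intros e He. apply in_map_iff in He. destruct He as [d [<- Hd]]. apply in_seq in Hd.
    split; [simpl; lia|]. apply IH. intros g Hg. apply HQ. right. exact Hg.
  - intros _. rewrite map_map, map_id. apply seq_NoDup.
Qed.

(* A row meets each pair (f, d) of a word in SOME column labelled f; equal columns
   for equal labels make this determine the whole row. *)
Lemma row_of_query_path (T : table F) r vs : wf_table k T -> In r (rows T) ->
  length vs = length (attrs T) -> row_in_sub T (combine (attrs T) vs) r -> vs = fst r.
Proof.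
  intros (_ & Hrows & _ & Hcol) Hr Hl [_ Hsub]. destruct (Hrows r Hr) as [Hlr _].
  apply nth_error_ext. intros n.
  destruct (lt_dec n (length (attrs T))) as [Hn|Hn].
  - destruct (nth_error (attrs T) n) as [a|] eqn:Ha; [|apply nth_error_None in Ha; lia].
    destruct (nth_error vs n) as [b|] eqn:Hb; [|apply nth_error_None in Hb; lia].
    destruct (Hsub a b) as [i [Hi1 Hi2]]; [eapply nth_error_In_combine; eassumption|].
    rewrite <- (Hcol i n a Hi1 Ha r Hr). symmetry. exact Hi2.
  - rewrite (proj2 (nth_error_None vs n)), (proj2 (nth_error_None (fst r) n)) by lia.
    reflexivity.
Qed.

Lemma decision_of_row (T : table F) r : wf_table k T -> In r (rows T) ->
  In (decision_of (fst r) (rows T)) (snd r).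
Proof.
  intros (_ & Hrows & Hnd & _) Hr. unfold decision_of.
  destruct (find _ (rows T)) as [r'|] eqn:Hf.
  - apply find_some in Hf. destruct Hf as [Hr' Heq].
    destruct (list_eq_dec Nat.eq_dec (fst r') (fst r)) as [He|]; [|discriminate].
    rewrite (NoDup_map_inj _ _ _ _ Hnd Hr' Hr He).
    destruct (Hrows r Hr) as [_ [_ Hne]]. destruct (snd r); [congruence|]. left. reflexivity.
  - eapply find_none in Hf; [|exact Hr]. simpl in Hf.
    destruct (list_eq_dec Nat.eq_dec (fst r) (fst r)); [discriminate|congruence].
Qed.

Lemma query_tree_for (T : table F) : wf_table k T ->
  tree_for k true T [query_tree (rows T) (attrs T) []].
Proof.
  intros HT. pose proof HT as (_ & Hrows & _).
  split; [discriminate|]. split; [reflexivity|]. split; [|split].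
  - intros x [<-|[]]. apply query_tree_wf. auto.
  - intros r Hr. destruct (Hrows r Hr) as [Hl [Hk _]].
    exists (combine (attrs T) (fst r), decision_of (fst r) (rows T)). split.
    + simpl. rewrite app_nil_r. apply (paths_query_tree_In _ _ []); assumption.
    + split; [exact Hr|]. intros f d Hfd. apply In_combine_nth_error, Hfd.
  - intros r p Hr Hp Hsub. simpl in Hp. rewrite app_nil_r in Hp.
    apply In_paths_query_tree in Hp. destruct Hp as [vs [Hl ->]].
    rewrite (row_of_query_path T r vs HT Hr Hl Hsub). apply decision_of_row; assumption.
Qed.

Lemma query_tree_cost psi (T : table F) :
  tree_cost psi [query_tree (rows T) (attrs T) []] <= psi (attrs T).
Proof.
  apply list_max_le, Forall_forall. intros x Hx. apply in_map_iff in Hx.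
  destruct Hx as [p [<- Hp]]. simpl in Hp. rewrite app_nil_r in Hp.
  apply In_paths_query_tree in Hp. destruct Hp as [vs [Hl ->]].
  simpl. rewrite map_fst_combine by exact Hl. reflexivity.
Qed.

Lemma node_wf_nondet (Q : F -> Prop) x : node_wf k Q true x -> node_wf k Q false x.
Proof.
  revert x. fix IH 2. intros x H. destruct H as [d|f ch Qf Hne Hch _].
  - constructor.
  - constructor; [exact Qf|exact Hne| |discriminate].
    intros e He. destruct (Hch e He) as [Hlt He']. split; [exact Hlt|exact (IH _ He')].
Qed.

Lemma tree_for_nondet (T : table F) G : tree_for k true T G -> tree_for k false T G.
Proof.
  intros (Hne & _ & Hwf & Hcover & Hcorrect). repeat split; try assumption; [discriminate|].
  intros x Hx. apply node_wf_nondet, Hwf, Hx.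
Qed.

End DecisionTrees.

Section Complexity.
Variables (F : Type) (k : nat) (psi : list F -> nat).
Hypothesis k_pos : 1 <= k.

Lemma least_tree_cost det (T : table F) : (exists G, tree_for k det T G) ->
  exists v, (exists G, tree_for k det T G /\ tree_cost psi G = v) /\
            (forall G, tree_for k det T G -> v <= tree_cost psi G).
Proof.
  intros [G HG].
  destruct (exists_least (fun v => exists G, tree_for k det T G /\ tree_cost psi G = v))
    as [m [Hm Hmin]]; [eauto|].
  exists m. split; [exact Hm|]. intros G' HG'. apply Hmin. eauto.
Qed.

Lemma psi_val_exists b (T : table F) : wf_table k T -> exists v, psi_val k psi b T v.
Proof.
  intros HT. pose proof (query_tree_for F k k_pos T HT) as Hq.
  destruct b; simpl; [eauto|apply least_tree_cost; eauto|].
  apply least_tree_cost. exists [query_tree F k (rows T) (attrs T) []].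
  apply tree_for_nondet, Hq.
Qed.

Lemma psi_val_unique b (T : table F) v w :
  psi_val k psi b T v -> psi_val k psi b T w -> v = w.
Proof.
  destruct b; simpl; [intros -> ->; reflexivity| |];
    intros [[G [HG <-]] Hmin] [[G' [HG' <-]] Hmin'];
    specialize (Hmin G' HG'); specialize (Hmin' G HG); lia.
Qed.

Definition psi_of (b : tag) (T : table F) : nat := epsilon (inhabits 0) (psi_val k psi b T).

Lemma psi_of_spec b (T : table F) : wf_table k T -> psi_val k psi b T (psi_of b T).
Proof. intros HT. unfold psi_of. apply epsilon_spec, psi_val_exists, HT. Qed.

Lemma psi_valE b (T : table F) v : wf_table k T -> psi_val k psi b T v <-> v = psi_of b T.
Proof.
  intros HT. split.
  - intros Hv. exact (psi_val_unique b T v _ Hv (psi_of_spec b T HT)).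
  - intros ->. apply psi_of_spec, HT.
Qed.

Lemma psi_of_i (T : table F) : wf_table k T -> psi_of ti T = psi (attrs T).
Proof. intros HT. symmetry. apply (psi_valE ti T _ HT). reflexivity. Qed.

Lemma psi_of_d_le_i (T : table F) : wf_table k T -> psi_of td T <= psi_of ti T.
Proof.
  intros HT. rewrite psi_of_i by exact HT. destruct (psi_of_spec td T HT) as [_ Hmin].
  eapply Nat.le_trans; [apply Hmin, (query_tree_for F k k_pos T HT)|apply query_tree_cost].
Qed.

Section Class.
Variable C : table F -> Prop.
Hypothesis C_wf : forall T, C T -> wf_table k T.

Lemma upper_setE b c n v :
  upper_set k C psi b c n v <-> exists T, C T /\ psi_of b T = v /\ psi_of c T <= n.
Proof.
  split.
  - intros [T [HT [Hb [w [Hc Hw]]]]]. exists T.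
    rewrite psi_valE in Hb, Hc by auto. subst. auto.
  - intros [T [HT [<- Hc]]]. exists T. split; [exact HT|]. split; [apply psi_of_spec; auto|].
    exists (psi_of c T). split; [apply psi_of_spec; auto|exact Hc].
Qed.

Lemma lower_setE b c n v :
  lower_set k C psi b c n v <-> exists T, C T /\ psi_of b T = v /\ n <= psi_of c T.
Proof.
  split.
  - intros [T [HT [Hb [w [Hc Hw]]]]]. exists T.
    rewrite psi_valE in Hb, Hc by auto. subst. auto.
  - intros [T [HT [<- Hc]]]. exists T. split; [exact HT|]. split; [apply psi_of_spec; auto|].
    exists (psi_of c T). split; [apply psi_of_spec; auto|exact Hc].
Qed.

Lemma U_funE b c : U_fun k C psi b c = upper_fun C (psi_of b) (psi_of c).
Proof.
  extensionality n. extensionality m. apply propositional_extensionality.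
  unfold U_fun, upper_fun. setoid_rewrite upper_setE.
  split; intros [Hm Hext]; split; try exact Hm.
  - intros T HT Hc. apply Hext. eauto.
  - intros v [T [HT [<- Hc]]]. auto.
Qed.

Lemma L_funE b c : L_fun k C psi b c = lower_fun C (psi_of b) (psi_of c).
Proof.
  extensionality n. extensionality m. apply propositional_extensionality.
  unfold L_fun, lower_fun. setoid_rewrite lower_setE.
  split; intros [Hm Hext]; split; try exact Hm.
  - intros T HT Hc. apply Hext. eauto.
  - intros v [T [HT [<- Hc]]]. auto.
Qed.

End Class.
End Complexity.

Lemma snd_T_tab j b c : snd (T_tab j b c) = t_tab j b c.
Proof. destruct j as [|[|[|[|[|[|[|[|j]]]]]]]]; destruct b, c; reflexivity. Qed.

Theorem corollary3 (F : Type) (k : nat) (C : table F -> Prop) (psi : list F -> nat)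
  (j : nat) :
  inhabited F -> 2 <= k -> closed_class k C -> 1 <= j <= 7 ->
  ((forall b c, typ_u k C psi b c = t_tab j b c) <->
   (forall b c, typ_full k C psi b c = T_tab j b c)).
Proof.
  intros _ Hk [C_wf _] Hj. assert (k_pos : 1 <= k) by lia.
  unfold typ_u, typ_full. split.
  - intros HU.
    assert (HU' : forall b c,
      typ (upper_fun C (psi_of F k psi b) (psi_of F k psi c)) = t_tab j b c).
    { intros b c. rewrite <- U_funE by assumption. apply HU. }
    assert (le_d_i : forall T, C T -> psi_of F k psi td T <= psi_of F k psi ti T).
    { intros T HT. apply psi_of_d_le_i, C_wf, HT. exact k_pos. }
    intros b c.
    rewrite HU, L_funE, (typ_lower_of_typ_upper _ C _ j le_d_i Hj HU') by assumption.
    rewrite <- snd_T_tab. symmetry. apply surjective_pairing.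
  - intros HT b c. rewrite <- snd_T_tab, <- HT. reflexivity.
Qed.
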